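(* Let $\mu>0$, $\tau>0$, and real numbers $\theta_0,u_0,\theta^\ast$ with $\theta_0\neq u_0$ satisfying $\mu\tau=\dfrac{\theta^\ast-\theta_0}{\theta_0-u_0}$. Consider the system $$\dot u=-\mu(u-\theta),\qquad \dot\theta=-\eta(t)\,(u-\theta^\ast),\qquad u(0)=u_0,\ \theta(0)=\theta_0,$$ on $[0,\tau]$ with the learning rate schedule $\eta(t)=\dfrac{1}{\tau-t+1/\mu}$. Then, with $m=\mu(\theta_0-u_0)$, the solution is $u(t)=u_0+mt$ and $\theta(t)=\frac{m}{\mu}+u_0+mt$ for $t\in[0,\tau]$; in particular $\ddot u\equiv 0$ (the sample centre of mass moves at constant speed) and $\theta(\tau)=\theta^\ast$.
   Context: This is the harmonic trap energy-based model: energy $E(x,\theta)=\frac12(x-\theta)^2$ on $\mathbb{R}$, model distribution Gaussian with mean $\theta$ and variance $\beta^{-1}$, data distribution Gaussian with mean $\theta^\ast$. Here $u(t)$ is the mean of the sample distribution evolving under overdamped Langevin dynamics with mobility $\mu$, and $\theta(t)$ is updated by the approximate maximum-likelihood gradient flow with time-dependent learning rate $\eta(t)$. The excess work of the process is $\int_0^\tau(\theta-u)\dot\theta\,dt=\frac12(\dot u/\mu)^2\big|_0^\tau+\frac1\mu\int_0^\tau\dot u^2\,dt$, whose integral part is minimized by $\ddot u=0$. *)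

From Stdlib Require Import Reals.
From Coquelicot Require Import Coquelicot.
Open Scope R_scope.

Definition eta_sched (mu tau t : R) : R := / (tau - t + / mu).

Definition solves_system (mu tau u0 theta0 theta_star : R) (u theta : R -> R) : Prop :=
  u 0 = u0 /\ theta 0 = theta0 /\
  forall t, 0 <= t <= tau ->
    is_derive u t (- mu * (u t - theta t)) /\
    is_derive theta t (- eta_sched mu tau t * (u t - theta_star)).

(* The schedule is chosen so that the affine pair u(t) = u0 + m t,
   theta(t) = u(t) + m/mu solves the system: along it u - theta* equals
   -m (tau - t + 1/mu) = -m / eta(t), so theta' = m = u'.  The hypothesis on
   mu tau says exactly that theta reaches theta* at time tau.  Conversely, the
   difference (a, b) of two solutions solves the linear system
   a' = -mu (a - b), b' = -eta a with 0 < eta <= mu on [0, tau]; for it the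
   weighted energy (a^2 + b^2) e^(-2 mu t) is nonincreasing, hence stays 0. *)

From Stdlib Require Import Reals Lra Psatz.
From Coquelicot Require Import Coquelicot.
Open Scope R_scope.

Lemma nonpos_derive_le (F F' : R -> R) (a b : R) :
  a <= b ->
  (forall x, a <= x <= b -> is_derive F x (F' x)) ->
  (forall x, a <= x <= b -> F' x <= 0) ->
  F b <= F a.
Proof.
  intros Hab HF HF'.
  destruct (MVT_gen F a b F') as [c [Hc Hmvt]];
    rewrite ?Rmin_left, ?Rmax_right in * by lra.
  - intros x Hx; apply HF; lra.
  - intros x Hx; apply continuity_pt_filterlim, (ex_derive_continuous F x).
    exists (F' x); apply HF; lra.
  - assert (Hc' := HF' c Hc). nra.
Qed.

Lemma is_derive_weighted_energy (C : R) (a b : R -> R) (t da db : R) :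
  is_derive a t da -> is_derive b t db ->
  is_derive (fun x => (a x * a x + b x * b x) * exp (- C * x)) t
    ((2 * a t * da + 2 * b t * db - C * (a t * a t + b t * b t)) * exp (- C * t)).
Proof.
  intros Ha Hb.
  assert (Hsq := is_derive_plus _ _ _ _ _
                   (is_derive_mult _ _ _ _ _ Ha Ha Rmult_comm)
                   (is_derive_mult _ _ _ _ _ Hb Hb Rmult_comm)).
  assert (Hexp : is_derive (fun x => exp (- C * x)) t (- C * exp (- C * t)))
    by (auto_derive; [exact I | ring]).
  assert (H := is_derive_mult _ _ _ _ _ Hsq Hexp Rmult_comm).
  replace ((2 * a t * da + 2 * b t * db - C * (a t * a t + b t * b t)) * exp (- C * t))
    with (plus (mult (plus (mult da (a t) + mult (a t) da) (mult db (b t) + mult (b t) db))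
                     (exp (- C * t)))
               (mult (a t * a t + b t * b t) (- C * exp (- C * t))))
    by (unfold plus, mult; simpl; ring).
  exact H.
Qed.

Lemma damped_quadratic_form_nonpos (mu k x y : R) :
  0 < mu -> 0 <= k <= mu ->
  2 * x * (- mu * (x - y)) + 2 * y * (- k * x) - 2 * mu * (x * x + y * y) <= 0.
Proof.
  intros Hmu Hk.
  (* (mu - k) (x - y)^2 >= 0 bounds the cross term 2 (mu - k) x y by (mu - k) (x^2 + y^2) *)
  assert (Hxy : 0 <= (mu - k) * Rsqr (x - y))
    by (apply Rmult_le_pos; [lra | apply Rle_0_sqr]).
  assert (Hk2 : 0 <= k * (Rsqr x + Rsqr y))
    by (apply Rmult_le_pos; [lra | apply Rplus_le_le_0_compat; apply Rle_0_sqr]).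
  assert (Hx : 0 <= mu * Rsqr x) by (apply Rmult_le_pos; [lra | apply Rle_0_sqr]).
  assert (Hy : 0 <= mu * Rsqr y) by (apply Rmult_le_pos; [lra | apply Rle_0_sqr]).
  unfold Rsqr in *. lra.
Qed.

Section DampedLinearSystem.

Variables (mu tau : R) (k a b : R -> R).
Hypothesis mu_gt0 : 0 < mu.
Hypothesis k_bounds : forall t, 0 <= t <= tau -> 0 <= k t <= mu.
Hypothesis a0 : a 0 = 0.
Hypothesis b0 : b 0 = 0.
Hypothesis a_derive : forall t, 0 <= t <= tau -> is_derive a t (- mu * (a t - b t)).
Hypothesis b_derive : forall t, 0 <= t <= tau -> is_derive b t (- k t * a t).

Lemma damped_system_zero t : 0 <= t <= tau -> a t = 0 /\ b t = 0.
Proof.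
  intros Ht.
  pose (E := fun x => (a x * a x + b x * b x) * exp (- (2 * mu) * x)).
  assert (HE : E t <= E 0).
  { apply (nonpos_derive_le E
             (fun x => (2 * a x * (- mu * (a x - b x)) + 2 * b x * (- k x * a x)
                        - 2 * mu * (a x * a x + b x * b x)) * exp (- (2 * mu) * x)));
      [lra | |].
    - intros x Hx. apply is_derive_weighted_energy; [apply a_derive | apply b_derive]; lra.
    - intros x Hx. apply Rmult_le_0_r; [| apply Rlt_le, exp_pos].
      apply damped_quadratic_form_nonpos; [exact mu_gt0 | apply k_bounds; lra]. }
  assert (Hexp := exp_pos (- (2 * mu) * t)).
  unfold E in HE. rewrite a0, b0 in HE.
  assert (Hsum : a t * a t + b t * b t <= 0) by nra.
  split; nra.
Qed.

End DampedLinearSystem.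

Lemma eta_sched_bounds (mu tau t : R) :
  0 < mu -> t <= tau -> 0 < eta_sched mu tau t <= mu.
Proof.
  intros Hmu Ht. unfold eta_sched.
  assert (Hinv : 0 < / mu) by (apply Rinv_0_lt_compat; exact Hmu).
  split.
  - apply Rinv_0_lt_compat; lra.
  - rewrite <- (Rinv_inv mu) at 2. apply Rinv_le_contravar; lra.
Qed.

Lemma solves_system_unique (mu tau u0 theta0 theta_star : R) (u1 th1 u2 th2 : R -> R) :
  0 < mu ->
  solves_system mu tau u0 theta0 theta_star u1 th1 ->
  solves_system mu tau u0 theta0 theta_star u2 th2 ->
  forall t, 0 <= t <= tau -> u1 t = u2 t /\ th1 t = th2 t.
Proof.
  intros Hmu [Hu1 [Hth1 H1]] [Hu2 [Hth2 H2]] t Ht.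
  cut ((fun x => u1 x - u2 x) t = 0 /\ (fun x => th1 x - th2 x) t = 0); [lra |].
  apply (damped_system_zero mu tau (eta_sched mu tau)); auto.
  - intros x Hx. pose proof (eta_sched_bounds mu tau x Hmu). lra.
  - lra.
  - lra.
  - intros x Hx. destruct (H1 x Hx) as [Hd1 _], (H2 x Hx) as [Hd2 _].
    replace (- mu * (u1 x - u2 x - (th1 x - th2 x)))
      with (minus (- mu * (u1 x - th1 x)) (- mu * (u2 x - th2 x)))
      by (unfold minus, plus, opp; simpl; ring).
    exact (is_derive_minus _ _ _ _ _ Hd1 Hd2).
  - intros x Hx. destruct (H1 x Hx) as [_ Hd1], (H2 x Hx) as [_ Hd2].
    replace (- eta_sched mu tau x * (u1 x - u2 x))
      with (minus (- eta_sched mu tau x * (u1 x - theta_star))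
                  (- eta_sched mu tau x * (u2 x - theta_star)))
      by (unfold minus, plus, opp; simpl; ring).
    exact (is_derive_minus _ _ _ _ _ Hd1 Hd2).
Qed.

Lemma affine_solves_system (mu tau u0 theta0 theta_star : R) :
  0 < mu -> theta_star = theta0 + mu * (theta0 - u0) * tau ->
  let m := mu * (theta0 - u0) in
  solves_system mu tau u0 theta0 theta_star
    (fun t => u0 + m * t) (fun t => m / mu + u0 + m * t).
Proof.
  intros Hmu Hstar m. unfold m.
  split; [ring |]. split; [field; lra |].
  intros t Ht. assert (Hpos : 0 < tau - t + / mu)
    by (pose proof (Rinv_0_lt_compat mu Hmu); lra).
  split; auto_derive; try exact I.
  - field. lra.
  - unfold eta_sched. rewrite Hstar. field. split; [lra | nra].
Qed.

Lemma Derive_n_2_affine_loc (f : R -> R) (c m x : R) :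
  locally x (fun y => f y = c + m * y) -> Derive_n f 2 x = 0.
Proof.
  intros Hloc. rewrite (Derive_n_ext_loc _ _ 2 x Hloc). simpl.
  rewrite (Derive_ext _ (fun _ => m)) by (intro y; apply is_derive_unique; auto_derive; [exact I | ring]).
  apply Derive_const.
Qed.

Theorem mainTheorem2 (mu tau theta0 u0 theta_star : R) :
  0 < mu -> 0 < tau -> theta0 <> u0 ->
  mu * tau = (theta_star - theta0) / (theta0 - u0) ->
  let m := mu * (theta0 - u0) in
  (* the explicit pair is a solution *)
  solves_system mu tau u0 theta0 theta_star
    (fun t => u0 + m * t) (fun t => m / mu + u0 + m * t) /\
  (* and every solution coincides with it on [0, tau], moves at constant
     speed, has zero acceleration, and reaches theta* at time tau *)
  (forall u theta : R -> R,
     solves_system mu tau u0 theta0 theta_star u theta ->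
     (forall t, 0 <= t <= tau ->
        u t = u0 + m * t /\ theta t = m / mu + u0 + m * t /\ Derive u t = m) /\
     (forall t, 0 < t < tau -> Derive_n u 2 t = 0) /\
     theta tau = theta_star).
Proof.
  intros Hmu Htau Hne Hrel m.
  assert (Hstar : theta_star = theta0 + mu * (theta0 - u0) * tau).
  { replace (mu * (theta0 - u0) * tau) with (mu * tau * (theta0 - u0)) by ring.
    rewrite Hrel. field. lra. }
  assert (Haff := affine_solves_system mu tau u0 theta0 theta_star Hmu Hstar).
  split; [exact Haff |].
  intros u theta Hsol.
  assert (Hval : forall t, 0 <= t <= tau -> u t = u0 + m * t /\ theta t = m / mu + u0 + m * t)
    by exact (solves_system_unique _ _ _ _ _ _ _ _ _ Hmu Hsol Haff).
  split; [| split].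
  - intros t Ht. destruct (Hval t Ht) as [Hu Hth].
    split; [exact Hu |]. split; [exact Hth |].
    destruct Hsol as [_ [_ Hder]]. destruct (Hder t Ht) as [Hdu _].
    rewrite (is_derive_unique _ _ _ Hdu), Hu, Hth. unfold m. field. lra.
  - intros t Ht. apply (Derive_n_2_affine_loc _ u0 m).
    apply (locally_interval _ t 0 tau); try (simpl; lra).
    intros y Hy0 Hytau. apply Hval. simpl in *. lra.
  - destruct (Hval tau) as [_ Hth]; [lra |].
    rewrite Hth, Hstar. unfold m. field. lra.
Qed.
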